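(* Let $X$ be a continuum, let $n\geq 2$ be an integer, and let $f:X\to X$ be a map. Consider the statements: (1) $f$ is multi-sensitive; (2) $F_n(f)$ is multi-sensitive; (3) $SF_n(f)$ is multi-sensitive. Then (1) and (2) are equivalent, and (3) implies (2).
   Context: A continuum is a nonempty compact connected metric space $(X,d)$. For $n\in\mathbb{N}$, $F_n(X)$ is the set of nonempty subsets of $X$ with at most $n$ points, with the Hausdorff metric $d_H$; $F_1(X)=\{\{x\}:x\in X\}$. For $f:X\to X$, $F_n(f)(A)=f(A)$. For $n\geq 2$, $SF_n(X)=F_n(X)/F_1(X)$ (collapsing $F_1(X)$ to a point), $q$ the quotient map, $F_X=q(F_1(X))$, and $SF_n(f)(\chi)=q(F_n(f)(q^{-1}(\chi)))$ if $\chi\neq F_X$, $SF_n(f)(F_X)=F_X$. $SF_n(X)$ carries the metric $\rho(\chi_1,\chi_2)=\mathcal{H}^2(F_1(X)\cup q^{-1}(\chi_1),F_1(X)\cup q^{-1}(\chi_2))$, with $\mathcal{H}^2$ the Hausdorff metric on closed subsets of $F_n(X)$ induced by $d_H$. A map $g$ on a metric space $(Z,D)$ is multi-sensitive if there is $\delta>0$ such that for every $m\in\mathbb{N}$ and all nonempty open $U_1,\dots,U_m\subseteq Z$ there is $k\in\mathbb{N}$ such that for every $i$ there exist $x_i,y_i\in U_i$ with $D(g^k(x_i),g^k(y_i))>\delta$ (with $D=d,d_H,\rho$ for $f,F_n(f),SF_n(f)$). *)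

From HB Require Import structures.
From mathcomp Require Import all_boot all_order all_algebra.
From mathcomp Require Import all_classical all_reals all_analysis.
Set Implicit Arguments. Unset Strict Implicit.
 Unset Printing Implicit Defensive.
Import Order.TTheory GRing.Theory Num.Theory.
Local Open Scope classical_set_scope.
Local Open Scope ring_scope.

Definition dist_to (R : realType) (Z : Type) (D : Z -> Z -> R) (z : Z) (B : set Z) : R :=
  inf [set D z b | b in B].

Definition hausdorff (R : realType) (Z : Type) (D : Z -> Z -> R) (A B : set Z) : R :=
  Num.max (sup [set dist_to D a B | a in A]) (sup [set dist_to D b A | b in B]).

Definition Fn_pred (X : Type) (n : nat) (A : set X) : Prop :=
  A !=set0 /\ exists p : 'I_n -> X, A `<=` range p.

Definition Fn (X : Type) (n : nat) := {A : set X | Fn_pred n A}.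

Definition F1_pred (X : Type) (A : set X) : Prop := exists x : X, A = [set x].

Definition dH (R : realType) (X : metricType R) (n : nat) (A B : Fn X n) : R :=
  hausdorff (@mdist R X) (proj1_sig A) (proj1_sig B).

Lemma Fn_pred_image (X : Type) (n : nat) (f : X -> X) (A : set X) :
  Fn_pred n A -> Fn_pred n (f @` A).
Proof.
move=> [[x Ax] [p Ap]]; split; first by exists (f x); exists x.
exists (f \o p) => _ [a Aa <-]; have [i _ <-] := Ap a Aa; by exists i.
Qed.

Definition Fn_map (X : Type) (f : X -> X) (n : nat) (A : Fn X n) : Fn X n :=
  exist _ (f @` proj1_sig A) (Fn_pred_image f (proj2_sig A)).

(* SF_n(X) = F_n(X)/F_1(X): a point of SF_n(X) is represented by its fibre
   q^{-1}(chi), which is either F_1(X) (the point F_X) or a singleton {A}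
   with A not in F_1(X). *)
Definition F1set (X : Type) (n : nat) : set (Fn X n) :=
  [set A | F1_pred (proj1_sig A)].
Arguments F1set : clear implicits.

Definition SF_pred (X : Type) (n : nat) (chi : set (Fn X n)) : Prop :=
  chi = F1set X n \/ exists A : Fn X n, ~ F1_pred (proj1_sig A) /\ chi = [set A].

Definition SFn (X : Type) (n : nat) := {chi : set (Fn X n) | SF_pred chi}.

Lemma SF_pred_F1 (X : Type) (n : nat) : SF_pred (F1set X n).
Proof. by left. Qed.

Definition FX (X : Type) (n : nat) : SFn X n := exist _ (F1set X n) (@SF_pred_F1 X n).

Definition q_set (X : Type) (n : nat) (A : Fn X n) : set (Fn X n) :=
  if `[< F1_pred (proj1_sig A) >] then F1set X n else [set A].

Lemma SF_pred_q (X : Type) (n : nat) (A : Fn X n) : SF_pred (q_set A).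
Proof.
rewrite /q_set; case: asboolP => h; first by left.
by right; exists A.
Qed.

Definition q (X : Type) (n : nat) (A : Fn X n) : SFn X n := exist _ (q_set A) (SF_pred_q A).

Definition SF_map_set (X : Type) (f : X -> X) (n : nat) (chi : set (Fn X n)) : set (Fn X n) :=
  if `[< chi = F1set X n >] then F1set X n
  else \bigcup_(A in chi) q_set (Fn_map f A).

Lemma SF_pred_map (X : Type) (f : X -> X) (n : nat) (chi : set (Fn X n)) :
  SF_pred chi -> SF_pred (SF_map_set f chi).
Proof.
rewrite /SF_map_set; case: asboolP => h; first by left.
case=> [//|[A [_ ->]]]; rewrite bigcup_set1; exact: SF_pred_q.
Qed.

Definition SF_map (X : Type) (f : X -> X) (n : nat) (chi : SFn X n) : SFn X n :=
  exist _ (SF_map_set f (proj1_sig chi)) (SF_pred_map f (proj2_sig chi)).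

Definition rho (R : realType) (X : metricType R) (n : nat) (c1 c2 : SFn X n) : R :=
  hausdorff (@dH R X n) (F1set X n `|` proj1_sig c1) (F1set X n `|` proj1_sig c2).

Definition D_open (R : realType) (Z : Type) (D : Z -> Z -> R) (U : set Z) : Prop :=
  forall z, U z -> exists e : R, 0 < e /\ forall w, D z w < e -> U w.

Definition multi_sensitive (R : realType) (Z : Type) (D : Z -> Z -> R) (g : Z -> Z) : Prop :=
  exists delta : R, 0 < delta /\
    forall (m : nat) (U : 'I_m -> set Z),
      (forall i, D_open D (U i) /\ U i !=set0) ->
      exists k : nat, (0 < k)%N /\
        forall i, exists x y, U i x /\ U i y /\ delta < D (iter k g x) (iter k g y).

Arguments Fn_map {X} f n A.
Arguments SF_map {X} f n chi.

(* (1) -> (2): given open sets U_i of F_n(X), pick A_i = {p_i(1), ..., p_i(n)} in U_i and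
   apply the multi-sensitivity of f to the m*n small balls around the points p_i(j). At the
   resulting time k every ball contains a pair whose images are delta apart, so relative to a
   fixed image point P one point of each pair has its image delta/2 away from P. These points
   form a set B in U_i; replacing the one chosen in P's own pair by the point over P gives a
   set A in U_i, and every point of f^k(B) is delta/2 away from P, which lies in f^k(A).
   (2) -> (1): the sets {A | A ⊆ U} with U open are open in F_n(X).
   (3) -> (2): q does not increase distances, and for U open in F_n(X) the set q(U \ F_1(X)) is
   open; it is nonempty because a connected space with two points has no isolated point, so a
   singleton in U can be perturbed into a two-point set in U. *)
From HB Require Import structures.
From mathcomp Require Import all_boot all_order all_algebra.
From mathcomp Require Import all_classical all_reals all_analysis.
From mathcomp Require Import lra.
Import Order.TTheory GRing.Theory Num.Theory.
Local Open Scope classical_set_scope.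
Local Open Scope ring_scope.
Set Implicit Arguments. Unset Strict Implicit.

Section hausdorff_distance.
Variables (R : realType) (Z : Type) (D : Z -> Z -> R).

Lemma dist_to_ge z (B : set Z) c : B !=set0 -> (forall b, B b -> c <= D z b) ->
  c <= dist_to D z B.
Proof.
move=> [b Bb] h; apply: lb_le_inf; first by exists (D z b); exists b.
by move=> _ [w Bw <-]; exact: h.
Qed.

Lemma dist_to_lt z (B : set Z) c : B !=set0 -> dist_to D z B < c ->
  exists2 b, B b & D z b < c.
Proof.
move=> [b Bb] /inf_lt[]; first by exists (D z b); exists b.
by move=> _ [w Bw <-] h; exists w.
Qed.

Lemma hausdorffC (A B : set Z) : hausdorff D A B = hausdorff D B A.
Proof. by rewrite /hausdorff maxC. Qed.

Lemma hausdorff_ge_dist_to (A B : set Z) a :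
  has_ubound [set dist_to D a B | a in A] -> A a ->
  dist_to D a B <= hausdorff D A B.
Proof.
move=> ub Aa; rewrite /hausdorff le_max; apply/orP; left.
by apply: ub_le_sup => //; exists a.
Qed.

Lemma hausdorff_le (A B : set Z) c : A !=set0 -> B !=set0 ->
  (forall a, A a -> dist_to D a B <= c) -> (forall b, B b -> dist_to D b A <= c) ->
  hausdorff D A B <= c.
Proof.
move=> [a Aa] [b Bb] hA hB; rewrite /hausdorff ge_max; apply/andP; split.
  by apply: ge_sup; [exists (dist_to D a B); exists a|move=> _ [w Aw <-]; exact: hA].
by apply: ge_sup; [exists (dist_to D b A); exists b|move=> _ [w Bw <-]; exact: hB].
Qed.

Lemma hausdorff_gt (A B : set Z) c : A !=set0 -> B !=set0 -> c < hausdorff D A B ->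
  (exists2 a, A a & c < dist_to D a B) \/ (exists2 b, B b & c < dist_to D b A).
Proof.
move=> [a Aa] [b Bb]; rewrite /hausdorff lt_max => /orP[] /sup_gt.
  case; first by exists (dist_to D a B); exists a.
  by move=> _ [w Aw <-] h; left; exists w.
case; first by exists (dist_to D b A); exists b.
by move=> _ [w Bw <-] h; right; exists w.
Qed.

Hypothesis D_ge0 : forall a b, 0 <= D a b.

Lemma dist_to_le z (B : set Z) b : B b -> dist_to D z B <= D z b.
Proof.
move=> Bb; apply: ge_inf; last by exists b.
by exists 0 => _ [c _ <-].
Qed.

End hausdorff_distance.

Lemma D_openI (R : realType) (Z : Type) (D : Z -> Z -> R) (U V : set Z) :
  D_open D U -> D_open D V -> D_open D (U `&` V).
Proof.
move=> oU oV z [Uz Vz]; have [e1 [e1_gt0 h1]] := oU z Uz.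
have [e2 [e2_gt0 h2]] := oV z Vz.
exists (Num.min e1 e2); split; first by rewrite lt_min e1_gt0 e2_gt0.
by move=> w; rewrite lt_min => /andP[w1 w2]; split; [exact: h1|exact: h2].
Qed.

Lemma multi_sensitive_fin (R : realType) (Z : Type) (D : Z -> Z -> R) (g : Z -> Z) :
  multi_sensitive D g -> exists2 delta : R, 0 < delta &
    forall (I : finType) (U : I -> set Z), (forall i, D_open D (U i) /\ U i !=set0) ->
    exists k, (0 < k)%N /\ exists x y : I -> Z, forall i,
      [/\ U i (x i), U i (y i) & delta < D (iter k g (x i)) (iter k g (y i))].
Proof.
move=> [delta [delta_gt0 sens]]; exists delta => // I U UP.
have [k [k_gt0 hk]] := sens #|{: I}| (U \o enum_val) (fun j => UP (enum_val j)).
exists k; split => //.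
have /fin_all_exists[xy hxy] : forall i : I, exists xy : Z * Z,
    [/\ U i xy.1, U i xy.2 & delta < D (iter k g xy.1) (iter k g xy.2)].
  by move=> i; have [x [y]] := hk (enum_rank i); rewrite /= enum_rankK => -[? []]; exists (x, y).
by exists (fst \o xy), (snd \o xy).
Qed.

Lemma has_ubound_image_range (R : realType) (T : Type) (I : finType) (p : I -> T)
    (g : T -> R) (A : set T) :
  A `<=` range p -> has_ubound [set g a | a in A].
Proof.
move=> Ap; exists (\sum_i `|g (p i)|) => _ [a Aa <-].
have [i _ <-] := Ap a Aa.
rewrite (bigD1 i) //= (le_trans (ler_norm _)) // lerDl.
by apply: sumr_ge0 => j _; exact: normr_ge0.
Qed.

Lemma exists_lb_gt0 (R : realType) (I : finType) (e : I -> R) : (forall i, 0 < e i) ->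
  exists2 e0 : R, 0 < e0 & forall i, e0 <= e i.
Proof.
move=> e_gt0; exists (\big[Num.min/1]_i e i).
  by apply: (big_ind (fun x => 0 < x)) => // x y x0 y0; rewrite lt_min x0 y0.
by move=> i; rewrite (bigD1 i) //= ge_min lexx.
Qed.

Section metric_points.
Variables (R : realType) (X : metricType R).
Local Notation d := (@mdist R X).

Lemma D_open_mball (c : X) e : D_open d [set y | d c y < e].
Proof.
move=> z /= cz; exists (e - d c z); split; first by rewrite subr_gt0.
by move=> w zw; apply: le_lt_trans (metric_triangle c z w) _; rewrite -ltrBrDl.
Qed.

Lemma mdist_far_of_two (P u v : X) delta : delta < d u v ->
  delta / 2 < d P u \/ delta / 2 < d P v.
Proof.
move=> uv; apply: contrapT => /not_orP[/negP]; rewrite -leNgt => Pu /negP.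
rewrite -leNgt => Pv; have := metric_triangle u P v; rewrite (metric_sym u P); lra.
Qed.

Lemma connected_no_isolated (x y : X) : connected [set: X] -> x <> y ->
  forall z e, 0 < e -> exists2 w, w <> z & d z w < e.
Proof.
move=> conn xy z e e_gt0; apply: contrapT => noz.
have isolated w : d z w < e -> w = z.
  by move=> zw; apply: contrapT => wz; apply: noz; exists w.
have open_z : open [set z].
  rewrite openE => _ ->; rewrite /interior -metricType_numDomainType.filter_from_mdist_nbhs.
  by exists e => // w /isolated.
have closed_z : closed [set z].
  exact/accessible_closed_set1/hausdorff_accessible/metric_hausdorff.
have Ez := conn [set z] (ex_intro _ z erefl)
  (ex_intro2 _ _ [set z] open_z (esym (setTI _)))
  (ex_intro2 _ _ [set z] closed_z (esym (setTI _))).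
have xz : [set z] x by rewrite Ez.
have yz : [set z] y by rewrite Ez.
by apply: xy; rewrite xz yz.
Qed.

End metric_points.

Section Fn_points.
Variables (X : Type) (n : nat).
Hypothesis n_gt0 : (0 < n)%N.

Lemma Fn_pred_set1 (x : X) : Fn_pred n [set x].
Proof. by split; [exists x|exists (fun _ => x) => _ ->; exists (Ordinal n_gt0)]. Qed.

Lemma Fn_pred_range (w : 'I_n -> X) : Fn_pred n (range w).
Proof. by split; [exists (w (Ordinal n_gt0)); exists (Ordinal n_gt0)|exists w]. Qed.

Definition Fn_set1 (x : X) : Fn X n := exist _ [set x] (Fn_pred_set1 x).

Definition Fn_of_fun (w : 'I_n -> X) : Fn X n := exist _ (range w) (Fn_pred_range w).

End Fn_points.

Section hyperspace.
Variables (R : realType) (X : metricType R) (n : nat).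
Local Notation d := (@mdist R X).
Local Notation dH := (@dH R X n).
Implicit Types A B C : Fn X n.

Lemma Fn_neq0 A : sval A !=set0.
Proof. by case: A => ? []. Qed.

Lemma Fn_cover A : exists p : 'I_n -> X, sval A `<=` range p.
Proof. by case: A => ? []. Qed.

Lemma Fn_range A : exists p : 'I_n -> X, sval A = range p.
Proof.
have [a0 Aa0] := Fn_neq0 A; have [p Ap] := Fn_cover A.
exists (fun j => if `[< sval A (p j) >] then p j else a0).
apply/seteqP; split => [a Aa|_ [j _ <-]]; last by case: asboolP.
by have [j _ pj] := Ap a Aa; exists j => //; rewrite -pj; case: asboolP; rewrite pj.
Qed.

Lemma dH_ge_dist_to A B a : sval A a -> dist_to d a (sval B) <= dH A B.
Proof.
move=> Aa; apply: hausdorff_ge_dist_to => //.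
by have [p Ap] := Fn_cover A; exact: has_ubound_image_range Ap.
Qed.

Lemma dHC A B : dH A B = dH B A.
Proof. exact: hausdorffC. Qed.

Lemma dH_ge A B a c : sval A a -> (forall b, sval B b -> c <= d a b) -> c <= dH A B.
Proof.
by move=> Aa h; apply: le_trans (dH_ge_dist_to B Aa); apply: dist_to_ge; [exact: Fn_neq0|].
Qed.

Lemma dH_ge0 A B : 0 <= dH A B.
Proof. by have [a Aa] := Fn_neq0 A; apply: (dH_ge Aa) => b _; exact: mdist_ge0. Qed.

Lemma dH_le A B c :
  (forall a, sval A a -> exists2 b, sval B b & d a b <= c) ->
  (forall b, sval B b -> exists2 a, sval A a & d b a <= c) ->
  dH A B <= c.
Proof.
move=> hA hB; apply: hausdorff_le; try exact: Fn_neq0.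
  by move=> a /hA[b Bb]; apply: le_trans; apply: dist_to_le => //; exact: mdist_ge0.
by move=> b /hB[a Aa]; apply: le_trans; apply: dist_to_le => //; exact: mdist_ge0.
Qed.

Lemma dHxx A : dH A A = 0.
Proof.
apply/le_anti; rewrite dH_ge0 andbT.
by apply: dH_le => a Aa; exists a => //; rewrite mdistxx.
Qed.

Lemma dH_le_range A B (p w : 'I_n -> X) c : sval A = range p -> sval B = range w ->
  (forall j, d (p j) (w j) <= c) -> dH A B <= c.
Proof.
move=> Ap Bw pw; apply: dH_le; rewrite Ap Bw => _ [j _ <-].
  by exists (w j) => //; exists j.
by exists (p j); [exists j|rewrite metric_sym].
Qed.

Lemma dH_gt A B c : c < dH A B ->
  exists a b, [/\ sval A a, sval B b & c < d a b].
Proof.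
have [a0 Aa0] := Fn_neq0 A; have [b0 Bb0] := Fn_neq0 B.
move/hausdorff_gt => /(_ (Fn_neq0 A) (Fn_neq0 B))[[a Aa lt]|[b Bb lt]].
  exists a, b0; split => //; apply: lt_le_trans lt _.
  by apply: dist_to_le => //; exact: mdist_ge0.
exists a0, b; split => //; rewrite metric_sym; apply: lt_le_trans lt _.
by apply: dist_to_le => //; exact: mdist_ge0.
Qed.

Lemma dH_lt A B c b : sval B b -> dH A B < c -> exists2 a, sval A a & d b a < c.
Proof.
move=> Bb lt; apply: dist_to_lt; first exact: Fn_neq0.
by apply: le_lt_trans lt; rewrite dHC; exact: dH_ge_dist_to.
Qed.

Lemma dH_ge_half_set1 A B a b x : sval A a -> sval A b -> sval B = [set x] ->
  d a b / 2 <= dH A B.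
Proof.
move=> Aa Ab Bx.
have near_x z : sval A z -> d z x <= dH A B by move=> Az; apply: (dH_ge Az); rewrite Bx => _ ->.
have := metric_triangle a x b; have := near_x a Aa; have := near_x b Ab.
rewrite (metric_sym x b); lra.
Qed.

Lemma iter_Fn_map (f : X -> X) k A :
  sval (iter k (Fn_map f n) A) = iter k f @` sval A.
Proof.
elim: k => [|k IH] /=; first by rewrite image_id.
by rewrite IH image_comp.
Qed.

Lemma D_open_Fn_sub (U : set X) : D_open d U -> D_open dH [set A | sval A `<=` U].
Proof.
move=> oU A /= AU; have [p Ap] := Fn_cover A.
have /fin_all_exists[e he] : forall j : 'I_n, exists e : R, 0 < e /\
    (sval A (p j) -> forall w, d (p j) w < e -> U w).
  move=> j; have [Apj|nApj] := pselect (sval A (p j)); last by exists 1.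
  by have [e [e_gt0 he]] := oU _ (AU _ Apj); exists e.
have [e0 e0_gt0 e0_le] := exists_lb_gt0 (fun j => (he j).1).
exists e0; split => // B AB b Bb.
have [a Aa ba] := dH_lt Bb AB; have [j _ pja] := Ap a Aa.
apply: (he j).2; first by rewrite pja.
by rewrite pja metric_sym (lt_le_trans ba) // -pja.
Qed.

End hyperspace.

Section induced_map.
Variables (R : realType) (X : metricType R) (n : nat) (f : X -> X).
Hypothesis n_gt0 : (0 < n)%N.
Local Notation d := (@mdist R X).
Local Notation dH := (@dH R X n).

Lemma multi_sensitive_Fn_map : multi_sensitive d f -> multi_sensitive dH (Fn_map f n).
Proof.
move=> /multi_sensitive_fin[delta delta_gt0 sens]; exists (delta / 4).
split=> [|m U hU]; first lra.
have /fin_all_exists[c hc] : forall i : 'I_m, exists c : Fn X n * R * ('I_n -> X),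
    [/\ U i c.1.1, 0 < c.1.2, forall B, dH c.1.1 B < c.1.2 -> U i B & sval c.1.1 = range c.2].
  move=> i; have [A UA] := (hU i).2; have [e [e_gt0 he]] := (hU i).1 A UA.
  by have [p Ap] := Fn_range A; exists (A, e, p).
pose ball (ij : 'I_m * 'I_n) := [set y | d ((c ij.1).2 ij.2) y < (c ij.1).1.2 / 2].
have [|k [k_gt0 [x [y hxy]]]] := sens _ ball.
  move=> [i j]; split; first exact: D_open_mball.
  by exists ((c i).2 j); rewrite /ball /= mdistxx; have [] := hc i; lra.
exists k; split => // i; have [_ e_gt0 near_A Ar] := hc i.
have in_U (w : 'I_n -> X) : (forall j, ball (i, j) (w j)) -> U i (Fn_of_fun n_gt0 w).
  move=> wP; apply: near_A; apply: le_lt_trans (_ : (c i).1.2 / 2 < _); last lra.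
  by apply: (dH_le_range (w := w) Ar) => // j; exact/ltW/wP.
pose j0 := Ordinal n_gt0; pose P := iter k f (x (i, j0)).
have /choice[z hz] : forall j, exists w,
    ball (i, j) w /\ delta / 2 < d P (iter k f w).
  move=> j; have [xP yP /(mdist_far_of_two P)[]] := hxy (i, j).
    by exists (x (i, j)).
  by exists (y (i, j)).
pose a j := if j == j0 then x (i, j0) else z j.
exists (Fn_of_fun n_gt0 a), (Fn_of_fun n_gt0 z); split; [|split].
- by apply: in_U => j; rewrite /a; case: eqP => [->|_]; [case: (hxy (i, j0))|case: (hz j)].
- by apply: in_U => j; case: (hz j).
- apply: lt_le_trans (_ : delta / 2 <= _); first lra.
  apply: (dH_ge (a := P)); rewrite iter_Fn_map.
    by exists (a j0); [exists j0|rewrite /a eqxx].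
  by move=> _ [_ [j _ <-] <-]; exact/ltW/(hz j).2.
Qed.

Lemma multi_sensitive_of_Fn_map : multi_sensitive dH (Fn_map f n) -> multi_sensitive d f.
Proof.
move=> [delta [delta_gt0 sens]]; exists delta; split => // m U hU.
have [|k [k_gt0 hk]] := sens m (fun i => [set A : Fn X n | sval A `<=` U i]).
  move=> i; split; first exact/D_open_Fn_sub/(hU i).1.
  by have [x Ux] := (hU i).2; exists (Fn_set1 n_gt0 x) => /= _ ->.
exists k; split => // i; have [A [B [AU [BU /dH_gt[a [b []]]]]]] := hk i.
rewrite !iter_Fn_map => -[a' Aa' <-] [b' Bb' <-] lt.
by exists a', b'; split; [exact: AU|split; [exact: BU|]].
Qed.

End induced_map.

Section quotient.
Variables (R : realType) (X : metricType R) (n : nat).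
Local Notation d := (@mdist R X).
Local Notation dH := (@dH R X n).
Local Notation rho := (@rho R X n).
Hypothesis n_gt0 : (0 < n)%N.
Implicit Types A B C : Fn X n.

Lemma q_set_F1 A : F1_pred (sval A) -> q_set A = F1set X n.
Proof. by rewrite /q_set; case: asboolP. Qed.

Lemma q_set_F1C A : ~ F1_pred (sval A) -> q_set A = [set A].
Proof. by rewrite /q_set; case: asboolP. Qed.

Lemma q_surj (x0 : X) (chi : SFn X n) : exists A, chi = q A.
Proof.
case: chi => c [c1|[A [nA cA]]]; last by exists A; apply: eq_exist; rewrite q_set_F1C.
by exists (Fn_set1 n_gt0 x0); apply: eq_exist; rewrite q_set_F1 //; exists x0.
Qed.

Lemma SF_map_q (f : X -> X) A : SF_map f n (q A) = q (Fn_map f n A).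
Proof.
apply: eq_exist; rewrite /= /SF_map_set.
have [[x Ax]|nA] := pselect (F1_pred (sval A)).
  have fA1 : F1_pred (sval (Fn_map f n A)) by exists (f x); rewrite /= Ax image_set1.
  by rewrite !q_set_F1 ?asboolT //; exists x.
rewrite q_set_F1C //; case: asboolP => [E|_]; last by rewrite bigcup_set1.
by have : F1set X n A by rewrite -E.
Qed.

Lemma iter_SF_map_q (f : X -> X) k A :
  iter k (SF_map f n) (q A) = q (iter k (Fn_map f n) A).
Proof. by elim: k => [|k IH] //=; rewrite IH SF_map_q. Qed.

Lemma mem_q_set B : (F1set X n `|` q_set B) B.
Proof.
by have [B1|nB] := pselect (F1_pred (sval B)); [left|right; rewrite q_set_F1C].
Qed.

Lemma mem_q_setP A C : (F1set X n `|` q_set A) C -> F1set X n C \/ C = A.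
Proof.
case=> [|CA]; first by left.
have [A1|nA] := pselect (F1_pred (sval A)).
  by left; rewrite q_set_F1 in CA.
by right; rewrite q_set_F1C in CA.
Qed.

Lemma dist_to_le0 (S : set (Fn X n)) B : S B -> dist_to dH B S <= 0.
Proof. by move=> SB; rewrite -(dHxx B); apply: dist_to_le => //; exact: dH_ge0. Qed.

Lemma rho_q_le_dH A B : rho (q A) (q B) <= dH A B.
Proof.
have dist_le A' B' C : (F1set X n `|` q_set A') C ->
    dist_to dH C (F1set X n `|` q_set B') <= dH A' B'.
  move=> /mem_q_setP[C1|->]; first exact: le_trans (dist_to_le0 (or_introl C1)) (dH_ge0 _ _).
  by apply: dist_to_le; [exact: dH_ge0|exact: mem_q_set].
apply: hausdorff_le; [by exists A; exact: mem_q_set|by exists B; exact: mem_q_set| |].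
  by move=> C; exact: dist_le.
by move=> C BC; rewrite dHC; exact: dist_le.
Qed.

Lemma rho_ge_dist_to (chi psi : SFn X n) B : sval chi = [set B] ->
  dist_to dH B (F1set X n `|` sval psi) <= rho chi psi.
Proof.
move=> chiB; apply: hausdorff_ge_dist_to; last by right; rewrite chiB.
exists (Num.max 0 (dist_to dH B (F1set X n `|` sval psi))) => _ [C [C1|chiC] <-].
  by apply: le_trans (dist_to_le0 (or_introl C1)) _; rewrite le_max lexx.
by move: chiC; rewrite chiB => ->; rewrite le_max lexx orbT.
Qed.

Lemma F1C_two_points B : ~ F1_pred (sval B) ->
  exists b1 b2, [/\ sval B b1, sval B b2 & b1 <> b2].
Proof.
move=> nB; have [b1 Bb1] := Fn_neq0 B; apply: contrapT => no2; apply: nB.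
exists b1; apply/seteqP; split => [b Bb|_ ->] //=.
by apply: contrapT => ne; apply: no2; exists b1, b; split => // /esym.
Qed.

Lemma D_open_F1C : D_open dH (~` F1set X n).
Proof.
move=> B nB; have [b1 [b2 [Bb1 Bb2 /eqP b12]]] := F1C_two_points nB.
have b12_gt0 : 0 < d b1 b2 by rewrite mdist_gt0.
exists (d b1 b2 / 2); split => [|C BC [x Cx]]; first lra.
by have := dH_ge_half_set1 Bb1 Bb2 Cx; lra.
Qed.

Lemma D_open_q_image (U : set (Fn X n)) : U `<=` ~` F1set X n -> D_open dH U ->
  D_open rho [set q A | A in U].
Proof.
move=> UF1C oU _ [B UB <-]; have [e [e_gt0 he]] := oU B UB.
have [b1 [b2 [Bb1 Bb2 /eqP b12]]] := F1C_two_points (UF1C B UB).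
have b12_gt0 : 0 < d b1 b2 by rewrite mdist_gt0.
exists (Num.min e (d b1 b2 / 2)); split; first by rewrite lt_min e_gt0 /=; lra.
move=> psi; have [C ->] := q_surj b1 psi => lt; exists C => //; apply: he.
have BC := le_lt_trans (rho_ge_dist_to (chi := q B) (q C) (q_set_F1C (UF1C B UB))) lt.
have [|Z /mem_q_setP[[x Zx]|->]] := dist_to_lt _ BC; first by exists C; exact: mem_q_set.
  by have := dH_ge_half_set1 Bb1 Bb2 Zx; rewrite lt_min; lra.
by rewrite lt_min => /andP[].
Qed.

Lemma multi_sensitive_SF_map_two_points (f : X -> X) (x0 : X) :
  multi_sensitive rho (SF_map f n) -> exists x y : X, x <> y.
Proof.
move=> [delta [delta_gt0 sens]].
have [|k [_ hk]] := sens 1%N (fun _ => setT).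
  by move=> _; split; [move=> z _; exists 1|exists (FX X n)].
have [chi [psi [_ [_]]]] := hk ord0.
have [A ->] := q_surj x0 chi; have [B ->] := q_surj x0 psi.
rewrite !iter_SF_map_q => /lt_le_trans/(_ (rho_q_le_dH _ _)) lt.
apply: contrapT => no2; have eq_pts (x y : X) : x = y.
  by apply: contrapT => xy; apply: no2; exists x, y.
suff : dH (iter k (Fn_map f n) A) (iter k (Fn_map f n) B) <= 0 by lra.
have near_any (C : Fn X n) a : exists2 b, sval C b & d a b <= 0.
  by have [b Cb] := Fn_neq0 C; exists b; rewrite ?(eq_pts a b) ?mdistxx.
by apply: dH_le => a _; exact: near_any.
Qed.

End quotient.

Section quotient_sensitivity.
Variables (R : realType) (X : metricType R) (n : nat).
Local Notation d := (@mdist R X).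
Local Notation dH := (@dH R X n).
Local Notation rho := (@rho R X n).
Hypothesis n_gt1 : (1 < n)%N.
Let n_gt0 : (0 < n)%N := ltnW n_gt1.

Lemma Fn_open_meets_F1C (U : set (Fn X n)) : connected [set: X] ->
  (exists x y : X, x <> y) -> D_open dH U -> U !=set0 -> (U `&` ~` F1set X n) !=set0.
Proof.
move=> conn [x' [y' xy']] oU [A UA]; have [e [e_gt0 he]] := oU A UA.
have [[x Ax]|nA] := pselect (F1set X n A); last by exists A.
have [y yx xy] := connected_no_isolated conn xy' x e_gt0.
pose j0 := Ordinal n_gt0; pose j1 := Ordinal n_gt1.
pose C := Fn_of_fun n_gt0 (fun j => if j == j0 then x else y).
exists C; split.
  apply: he; apply: le_lt_trans xy; apply: dH_le => [a|_ [j _ <-]].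
    by rewrite Ax => ->; exists x; [exists j0 => //=; rewrite eqxx|rewrite mdistxx mdist_ge0].
  exists x; first by rewrite Ax.
  by case: eqP => _; rewrite ?mdistxx ?mdist_ge0 // metric_sym.
move=> [z Cz]; have : sval C x by exists j0; rewrite ?eqxx.
have : sval C y by exists j1.
by rewrite Cz => yz xz; apply: yx; rewrite yz xz.
Qed.

Lemma multi_sensitive_Fn_map_of_SF_map (f : X -> X) (x0 : X) :
  connected [set: X] ->
  multi_sensitive rho (SF_map f n) -> multi_sensitive dH (Fn_map f n).
Proof.
move=> conn sensSF; have two := multi_sensitive_SF_map_two_points n_gt0 x0 sensSF.
have [delta [delta_gt0 sens]] := sensSF; exists delta; split => // m U hU.
have [|k [k_gt0 hk]] := sens m (fun i => [set q A | A in U i `&` ~` F1set X n]).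
  move=> i; have [oU Un0] := hU i; split.
    by apply: (D_open_q_image n_gt0); [move=> ? []|apply: D_openI oU _; exact: D_open_F1C].
  by have [B UB] := Fn_open_meets_F1C conn two oU Un0; exists (q B), B.
exists k; split => // i; have [_ [_ [[B [UB _] <-] [[C [UC _] <-]]]]] := hk i.
rewrite !iter_SF_map_q => lt; exists B, C; do !split => //.
exact: lt_le_trans lt (rho_q_le_dH _ _).
Qed.

End quotient_sensitivity.

Unset Implicit Arguments.

Theorem theorem3 (R : realType) (X : metricType R) (n : nat) (f : X -> X) :
  [set: X] !=set0 -> compact [set: X] -> connected [set: X] ->
  (2 <= n)%N -> continuous f ->
  (multi_sensitive (@mdist R X) f <-> multi_sensitive (@dH R X n) (Fn_map f n)) /\
  (multi_sensitive (@rho R X n) (SF_map f n) -> multi_sensitive (@dH R X n) (Fn_map f n)).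
Proof.
move=> [x0 _] _ conn n_gt1 _; have n_gt0 : (0 < n)%N by exact: ltnW.
split; last exact: multi_sensitive_Fn_map_of_SF_map.
by split; [exact: multi_sensitive_Fn_map|exact: multi_sensitive_of_Fn_map].
Qed.
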